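(* Let $n\ge1$, let $r>0$, and let $\zeta$ be an unordered $n$-tuple of integers $\{\zeta^1,\ldots,\zeta^n\}$ with $\sum_i(\zeta^i)^2=r^2$, having exactly $k\ge1$ non-zero entries. Let $N_\zeta$ be the set of all distinct vectors of the form $(\pm\zeta^{\pi(1)},\ldots,\pm\zeta^{\pi(n)})$, $\pi\in S_n$. For every $\xi\in N_\zeta$ and every $\bar s\in\{1,\ldots,k\}$ let $B(\xi,\bar s)=[\xi_1,\ldots,\xi_n]\in\mathbb{Z}^{n\times n}$ be the matrix whose columns are the vectors $\xi_1,\ldots,\xi_n$ constructed from $\xi$ and $\bar s$ by the following rule (with $i_1<\cdots<i_k$ the indices of the non-zero coordinates of $\xi$ and $j_1<\cdots<j_{n-k}$ those of its zero coordinates): $\xi_1=\xi$; for $p=2,\ldots,k-\bar s+1$, $\xi_p$ is $\xi$ with the sign of coordinate $i_{\bar s-1+p}$ changed; for $p=k-\bar s+2,\ldots,k$, $\xi_p$ is $\xi$ with the sign of coordinate $i_{\bar s-1+p-k}$ changed; for $p=k+1,\ldots,n$, $\xi_p$ is $\xi$ with coordinate $i_{\bar s}$ replaced by $0$ and coordinate $j_{p-k}$ replaced by $\xi^{i_{\bar s}}$. Let $K_\zeta$ denote the family of all matrices $B(\xi,\bar s)$, $\xi\in N_\zeta$, $\bar s\in\{1,\ldots,k\}$ (indexed by the pairs $(\xi,\bar s)$, so that $|K_\zeta|=k|N_\zeta|$). Then every vector $\xi\in N_\zeta$ occurs as a column of exactly $nk$ members of the family $K_\zeta$.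
   Context: Each matrix $B(\xi,\bar s)$ is viewed as generating the lattice $B\mathbb{Z}^n$; ''occurs as a column of exactly $nk$ members'' counts members of the indexed family $K_\zeta$. *)

From HB Require Import structures.
From mathcomp Require Import all_boot all_order all_algebra all_fingroup.
Set Implicit Arguments. Unset Strict Implicit. Unset Printing Implicit Defensive.
Import Order.TTheory GRing.Theory Num.Theory.
Local Open Scope ring_scope.

(* Vectors of Z^n are column vectors 'cV[int]_n; indices are 0-based in Rocq,
   1-based in the paper. *)

Section Defs.
Variable n : nat.
Implicit Types (x z : 'cV[int]_n).

Definition nzidx x : seq nat := [seq val i | i <- enum 'I_n & x i 0 != 0].
Definition zidx x : seq nat := [seq val i | i <- enum 'I_n & x i 0 == 0].

Definition entry x (a : nat) : int := nth 0 [seq x i 0 | i <- enum 'I_n] a.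

Definition flip x (t : nat) : 'cV[int]_n :=
  \col_i (if val i == t then - x i 0 else x i 0).

Definition movez x (a b : nat) : 'cV[int]_n :=
  \col_i (if val i == a then 0 else if val i == b then entry x a else x i 0).

(* the p-th column (p 1-based, 1 <= p <= n) of B(x, sb), sb in {1..k} *)
Definition Bcol x (sb p : nat) : 'cV[int]_n :=
  let I := nzidx x in let J := zidx x in let k := size I in
  if p == 1%N then x
  else if (p <= k + 1 - sb)%N then flip x (nth 0%N I (sb + p - 2))
  else if (p <= k)%N then flip x (nth 0%N I (sb + p - 2 - k))
  else movez x (nth 0%N I (sb - 1)) (nth 0%N J (p - k - 1)).

Definition Bmat x (sb : nat) : 'M[int]_n :=
  \matrix_(i, j) Bcol x sb j.+1 i 0.

Definition signperm z (pi : 'S_n) (s : {ffun 'I_n -> bool}) : 'cV[int]_n :=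
  \col_i ((-1) ^+ s i * z (pi i) 0).

Definition Nset z : seq 'cV[int]_n :=
  undup [seq signperm z ps.1 ps.2
        | ps <- enum {: 'S_n * {ffun 'I_n -> bool}}].

Definition Kfam z (k : nat) : seq ('cV[int]_n * nat) :=
  [seq (x, sb) | x <- Nset z, sb <- iota 1 k].

Definition is_column (v : 'cV[int]_n) (B : 'M[int]_n) : bool :=
  [exists j : 'I_n, col j B == v].

End Defs.

From HB Require Import structures.
From mathcomp Require Import all_boot all_order all_algebra all_fingroup zify.
Set Implicit Arguments. Unset Strict Implicit. Unset Printing Implicit Defensive.
Import Order.TTheory GRing.Theory Num.Theory.
Local Open Scope ring_scope.

(* Fix xi in N_zeta.  Every pair (j, c) of positions with xi^c <> 0 yields a
   member of K_zeta having xi as a column, [owner xi j c]: B(xi, s) if j = c;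
   B(xi with the sign of coordinate j changed, s) if xi^j <> 0; and
   B(xi with the entries at j and c exchanged, s') if xi^j = 0, where s, s'
   are chosen so that i_s = c, resp. i_s' = j.  Since the columns of B(x, s)
   are x itself, the sign changes of x at the non-zero coordinates other than
   i_s, and the moves of the entry at i_s to a zero coordinate, every member
   having xi as a column arises in this way from exactly one pair; and there
   are n k pairs. *)

Section Coordinates.
Variable n : nat.
Implicit Types (x z : 'cV[int]_n).

Lemma entryE x (i : 'I_n) : entry x i = x i 0.
Proof. by rewrite /entry (nth_map i) ?size_enum_ord // nth_ord_enum. Qed.

Lemma flipE x (j i : 'I_n) : flip x j i 0 = if i == j then - x i 0 else x i 0.
Proof. by rewrite mxE. Qed.

Lemma movezE x (a b i : 'I_n) :
  movez x a b i 0 = if i == a then 0 else if i == b then x a 0 else x i 0.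
Proof. by rewrite mxE entryE. Qed.

Lemma flipK x (j : 'I_n) : flip (flip x j) j = x.
Proof. by apply/matrixP => i l; rewrite ord1 !flipE; case: (i == j); rewrite ?opprK. Qed.

Lemma movezK x (c d : 'I_n) : c != d -> x d 0 = 0 -> movez (movez x c d) d c = x.
Proof.
move=> ncd xd; apply/matrixP => i l; rewrite ord1 !movezE.
case: (eqVneq i d) => [->|nid] //; case: (eqVneq i c) => [->|nic] //.
by rewrite (eq_sym d c) (negbTE ncd) eqxx.
Qed.

Lemma mem_nzidx x (i : 'I_n) : ((i : nat) \in nzidx x) = (x i 0 != 0).
Proof. by rewrite /nzidx (mem_map val_inj) mem_filter mem_enum andbT. Qed.

Lemma mem_zidx x (i : 'I_n) : ((i : nat) \in zidx x) = (x i 0 == 0).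
Proof. by rewrite /zidx (mem_map val_inj) mem_filter mem_enum andbT. Qed.

Lemma nzidxP x a : a \in nzidx x -> exists2 i : 'I_n, a = i & x i 0 != 0.
Proof. by case/mapP => i; rewrite mem_filter => /andP[xi _] ->; exists i. Qed.

Lemma zidxP x a : a \in zidx x -> exists2 i : 'I_n, a = i & x i 0 == 0.
Proof. by case/mapP => i; rewrite mem_filter => /andP[xi _] ->; exists i. Qed.

Lemma uniq_nzidx x : uniq (nzidx x).
Proof. by rewrite /nzidx (map_inj_uniq val_inj) filter_uniq ?enum_uniq. Qed.

Lemma size_nzidx x : size (nzidx x) = #|[pred i : 'I_n | x i 0 != 0]|.
Proof. by rewrite /nzidx size_map size_filter cardE size_filter enumT. Qed.

Lemma size_zidx x : size (zidx x) = (n - size (nzidx x))%N.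
Proof.
rewrite /zidx /nzidx !size_map !size_filter.
have := count_predC (fun i : 'I_n => x i 0 != 0) (enum 'I_n).
rewrite size_enum_ord => h; rewrite -[X in (X - _)%N]h addKn.
by apply: eq_count => i /=; rewrite negbK.
Qed.

Lemma flip_eq0 x (a b : 'I_n) : (flip x a b 0 == 0) = (x b 0 == 0).
Proof. by rewrite flipE; case: (b == a); rewrite ?oppr_eq0. Qed.

Lemma nzidx_flip x (j : 'I_n) : nzidx (flip x j) = nzidx x.
Proof.
by rewrite /nzidx; congr map; apply: eq_filter => i; rewrite flip_eq0.
Qed.

Lemma index_nzidx_inj x (a b : 'I_n) : x a 0 != 0 -> x b 0 != 0 ->
  index (a : nat) (nzidx x) = index (b : nat) (nzidx x) -> a = b.
Proof.
move=> xa xb eab; apply: ord_inj.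
rewrite -(nth_index 0%N (_ : (a : nat) \in nzidx x)) ?mem_nzidx //.
by rewrite eab nth_index ?mem_nzidx.
Qed.

Lemma flip_neq x (a : 'I_n) : x a 0 != 0 -> flip x a != x.
Proof.
by move=> xa; apply/eqP => /matrixP/(_ a 0)/eqP; rewrite flipE eqxx eqNr (negbTE xa).
Qed.

Lemma flip_inj x (a a' : 'I_n) : x a 0 != 0 -> flip x a = flip x a' -> a = a'.
Proof.
move=> xa /matrixP/(_ a 0); rewrite !flipE eqxx.
by case: (eqVneq a a') => // _ /eqP; rewrite eqNr (negbTE xa).
Qed.

Lemma movez_neq_flip x (c d a : 'I_n) : c != d -> x c 0 != 0 -> x d 0 = 0 ->
  movez x c d != flip x a.
Proof.
move=> ncd xc xd; apply/eqP => /matrixP/(_ d 0)/eqP.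
rewrite movezE flipE (eq_sym d c) (negbTE ncd) eqxx xd.
by case: (d == a); rewrite ?oppr0 (negbTE xc).
Qed.

Lemma movez_neq x (c d : 'I_n) : c != d -> x c 0 != 0 -> x d 0 = 0 -> movez x c d != x.
Proof.
move=> ncd xc xd; apply/eqP => /matrixP/(_ d 0).
by rewrite movezE (eq_sym d c) (negbTE ncd) eqxx xd => /eqP; rewrite (negbTE xc).
Qed.

Lemma movez_inj x (c d c' d' : 'I_n) : c != d -> x c 0 != 0 -> x d 0 = 0 ->
  x c' 0 != 0 -> movez x c d = movez x c' d' -> (c, d) = (c', d').
Proof.
move=> ncd xc xd xc' e.
have ec : c = c'.
  move/matrixP/(_ c 0): e; rewrite !movezE eqxx.
  case: (eqVneq c c') => // _.
  by case: ifP => _ /esym/eqP; rewrite ?(negbTE xc) ?(negbTE xc').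
subst c'; congr pair; move/matrixP/(_ d 0): e.
rewrite !movezE (eq_sym d c) (negbTE ncd) eqxx.
by case: (eqVneq d d') => // _ /eqP; rewrite xd (negbTE xc).
Qed.

End Coordinates.

Section SignedPermutations.
Variable n : nat.
Implicit Types (x z : 'cV[int]_n).

Lemma NsetP z x : reflect (exists pi s, x = signperm z pi s) (x \in Nset z).
Proof.
rewrite /Nset mem_undup; apply: (iffP mapP) => [[[pi s] _ ->]|[pi [s ->]]].
  by exists pi, s.
by exists (pi, s); rewrite ?mem_enum.
Qed.

Lemma signperm_Nset z x (t : 'S_n) (e : {ffun 'I_n -> bool}) :
  x \in Nset z -> signperm x t e \in Nset z.
Proof.
case/NsetP => pi [s ->]; apply/NsetP; exists (t * pi)%g, [ffun i => e i (+) s (t i)].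
by apply/matrixP => i l; rewrite !mxE ffunE permM signr_addb mulrA.
Qed.

Lemma flip_Nset z x (j : 'I_n) : x \in Nset z -> flip x j \in Nset z.
Proof.
have -> : flip x j = signperm x 1%g [ffun i => i == j].
  apply/matrixP => i l; rewrite ord1 flipE !mxE ffunE perm1.
  by case: (i == j); rewrite ?mulN1r ?mul1r.
exact: signperm_Nset.
Qed.

Lemma movez_Nset z x (c d : 'I_n) : x \in Nset z -> x d 0 = 0 -> movez x c d \in Nset z.
Proof.
move=> hx xd; have -> : movez x c d = signperm x (tperm c d) [ffun=> false].
  apply/matrixP => i l; rewrite ord1 movezE !mxE ffunE mul1r.
  case: (eqVneq i c) => [->|nic]; first by rewrite tpermL.
  case: (eqVneq i d) => [->|nid]; first by rewrite tpermR.
  by rewrite tpermD // eq_sym.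
exact: signperm_Nset.
Qed.

Lemma size_nzidx_Nset z x : x \in Nset z ->
  size (nzidx x) = #|[set i : 'I_n | z i 0 != 0]|.
Proof.
case/NsetP => pi [s ->]; rewrite size_nzidx -(card_preimset _ (@perm_inj _ pi)).
by apply: eq_card => i; rewrite !inE mxE mulf_eq0 signr_eq0.
Qed.

Lemma mem_Kfam z k q : (q \in Kfam z k) = (q.1 \in Nset z) && (1 <= q.2 <= k)%N.
Proof.
case: q => x sb; apply/allpairsP/andP => [[[y t] [/= hy ht [-> ->]]]|[hx hsb]].
  by move: ht; rewrite mem_iota add1n ltnS.
by exists (x, sb); rewrite mem_iota add1n ltnS.
Qed.

Lemma uniq_Kfam z k : uniq (Kfam z k).
Proof.
rewrite /Kfam allpairs_uniq ?undup_uniq ?iota_uniq //.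
by move=> [a b] [a' b'] _ _ /= [-> ->].
Qed.

End SignedPermutations.

Section Columns.
Variable n : nat.
Implicit Types (x v : 'cV[int]_n).

Lemma is_columnP v x sb :
  reflect (exists2 p, (1 <= p <= n)%N & Bcol x sb p = v) (is_column v (Bmat x sb)).
Proof.
apply: (iffP existsP) => [[j /eqP hj]|[p /andP[p1 pn] hp]].
  exists j.+1; first by rewrite /= ltn_ord.
  by rewrite -hj; apply/matrixP => i l; rewrite !mxE ord1.
have ltpn : (p.-1 < n)%N by lia.
exists (Ordinal ltpn); apply/eqP/matrixP => i l; rewrite !mxE ord1 /= prednK //.
by rewrite hp.
Qed.

Lemma Bcol_cases x sb p : let k := size (nzidx x) in
  (1 <= sb <= k)%N -> (1 <= p <= n)%N ->
  [\/ Bcol x sb p = x,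
      exists2 m, (m < k)%N && (m != sb.-1) &
        Bcol x sb p = flip x (nth 0%N (nzidx x) m) |
      exists2 m, (m < n - k)%N &
        Bcol x sb p = movez x (nth 0%N (nzidx x) sb.-1) (nth 0%N (zidx x) m)].
Proof.
move=> k /andP[sb1 sbk] /andP[p1 pn]; rewrite /Bcol -/k.
case: eqP => [_|hp1]; first by constructor 1.
case: ifP => hp2; first by constructor 2; exists (sb + p - 2)%N => //; lia.
case: ifP => hp3; first by constructor 2; exists (sb + p - 2 - k)%N => //; lia.
by constructor 3; exists (p - k - 1)%N; rewrite ?subn1 //; lia.
Qed.

Lemma is_column_self x sb : (0 < n)%N -> is_column x (Bmat x sb).
Proof. by move=> n0; apply/is_columnP; exists 1%N; rewrite ?n0. Qed.

Lemma is_column_flip x sb m : let k := size (nzidx x) in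
  (1 <= sb <= k)%N -> (m < k)%N -> m != sb.-1 ->
  is_column (flip x (nth 0%N (nzidx x) m)) (Bmat x sb).
Proof.
move=> k /andP[sb1 sbk] mk msb; apply/is_columnP.
have kn : (k <= n)%N by rewrite /k size_nzidx -[X in (_ <= X)%N]card_ord max_card.
case: (leqP sb m) => [sbm|msb'].
  exists (m - sb + 2)%N; first lia.
  rewrite /Bcol -/k ifF; last lia.
  by rewrite ifT; [congr flip; congr nth|]; lia.
exists (m + k - sb + 2)%N; first lia.
rewrite /Bcol -/k ifF; last lia.
by rewrite ifF ?ifT; [congr flip; congr nth| |]; lia.
Qed.

Lemma is_column_movez x sb m : let k := size (nzidx x) in
  (1 <= sb <= k)%N -> (m < size (zidx x))%N ->
  is_column (movez x (nth 0%N (nzidx x) sb.-1) (nth 0%N (zidx x) m)) (Bmat x sb).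
Proof.
move=> k /andP[sb1 sbk]; rewrite size_zidx -/k => mk; apply/is_columnP.
exists (k + 1 + m)%N; first lia.
rewrite /Bcol -/k ifF; last lia.
by rewrite !ifF ?subn1; [congr movez; congr nth| |]; lia.
Qed.

End Columns.

Section Owner.
Variable n : nat.
Implicit Types (x xi z : 'cV[int]_n).

Definition nzrank x (c : 'I_n) : nat := (index (c : nat) (nzidx x)).+1.

Lemma nzrank_bounds x (c : 'I_n) : x c 0 != 0 -> (1 <= nzrank x c <= size (nzidx x))%N.
Proof. by rewrite /nzrank ltnS index_mem mem_nzidx. Qed.

Lemma nth_nzrank x (c : 'I_n) : x c 0 != 0 -> nth 0%N (nzidx x) (nzrank x c).-1 = c.
Proof. by move=> xc; rewrite /nzrank /= nth_index ?mem_nzidx. Qed.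

Lemma nzrank_nth x sb (c : 'I_n) : (1 <= sb <= size (nzidx x))%N ->
  nth 0%N (nzidx x) sb.-1 = c -> nzrank x c = sb.
Proof.
by move=> /andP[sb1 sbk] hc; rewrite /nzrank -hc index_uniq ?uniq_nzidx ?prednK.
Qed.

Lemma nzrank_flip x (j c : 'I_n) : nzrank (flip x j) c = nzrank x c.
Proof. by rewrite /nzrank nzidx_flip. Qed.

Definition owner xi (j c : 'I_n) : 'cV[int]_n * nat :=
  if j == c then (xi, nzrank xi c)
  else if xi j 0 != 0 then (flip xi j, nzrank xi c)
  else (movez xi c j, nzrank (movez xi c j) j).

Lemma owner_Nset z xi (j c : 'I_n) : xi \in Nset z -> (owner xi j c).1 \in Nset z.
Proof.
rewrite /owner => hxi; case: eqP => // _; case: ifP => [_|/negbFE/eqP xj].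
  exact: flip_Nset.
exact: movez_Nset.
Qed.

Lemma owner_rank xi (j c : 'I_n) : xi c 0 != 0 ->
  (1 <= (owner xi j c).2 <= size (nzidx (owner xi j c).1))%N.
Proof.
rewrite /owner => xc; case: eqP => [_|/eqP njc]; first exact: nzrank_bounds.
case: ifP => [_|/negbFE/eqP xj] /=; first by rewrite nzidx_flip; apply: nzrank_bounds.
by apply: nzrank_bounds; rewrite movezE (negbTE njc) eqxx.
Qed.

Lemma owner_column xi (j c : 'I_n) : xi c 0 != 0 ->
  is_column xi (Bmat (owner xi j c).1 (owner xi j c).2).
Proof.
rewrite /owner => xc; case: (eqVneq j c) => [_|njc].
  by apply: is_column_self; apply: leq_ltn_trans (ltn_ord c).
case: ifP => [xj|/negbFE/eqP xj] /=.
  have sbk := nzrank_bounds xc; rewrite -(nzidx_flip xi j) in sbk.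
  have jk : (index (j : nat) (nzidx xi) < size (nzidx xi))%N by rewrite index_mem mem_nzidx.
  have := is_column_flip sbk; rewrite nzidx_flip => /(_ _ jk).
  rewrite nth_index ?mem_nzidx // flipK; apply.
  by apply: contra_neq njc => /(index_nzidx_inj xj xc).
set x := movez xi c j.
have xj' : x j 0 = xi c 0 by rewrite movezE (negbTE njc) eqxx.
have xc' : x c 0 = 0 by rewrite movezE eqxx.
have ck : (index (c : nat) (zidx x) < size (zidx x))%N by rewrite index_mem mem_zidx xc'.
have xj0 : x j 0 != 0 by rewrite xj'.
have := is_column_movez (nzrank_bounds xj0) ck.
by rewrite nth_nzrank // nth_index ?mem_zidx ?xc' // /x movezK // eq_sym.
Qed.

Lemma owner_inj xi (j c j' c' : 'I_n) : xi c 0 != 0 -> xi c' 0 != 0 ->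
  owner xi j c = owner xi j' c' -> (j, c) = (j', c').
Proof.
move=> xc xc'; rewrite /owner.
case: (eqVneq j c) => [->|njc]; case: (eqVneq j' c') => [->|njc'].
- by case=> /(index_nzidx_inj xc xc') ->.
- case: ifP => [xj' [/esym/eqP]|/negbFE/eqP xj' [/esym/eqP]].
    by rewrite (negbTE (flip_neq xj')).
  by rewrite (negbTE (movez_neq _ xc' xj')) // eq_sym.
- case: ifP => [xj [/eqP]|/negbFE/eqP xj [/eqP]].
    by rewrite (negbTE (flip_neq xj)).
  by rewrite (negbTE (movez_neq _ xc xj)) // eq_sym.
case: ifP => [xj|/negbFE/eqP xj]; case: ifP => [xj'|/negbFE/eqP xj'] [].
- by move=> /(flip_inj xj) -> /(index_nzidx_inj xc xc') ->.
- by move=> /esym/eqP; rewrite (negbTE (movez_neq_flip _ _ xc' xj')) // eq_sym.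
- by move=> /eqP; rewrite (negbTE (movez_neq_flip _ _ xc xj)) // eq_sym.
have ncj : c != j by rewrite eq_sym.
by move=> /(movez_inj ncj xc xj xc') [-> ->].
Qed.

Lemma ownerP xi x sb : (1 <= sb <= size (nzidx x))%N -> is_column xi (Bmat x sb) ->
  exists j c, xi c 0 != 0 /\ (x, sb) = owner xi j c.
Proof.
move=> sbk /is_columnP[p hp <-].
have sbk' : (sb.-1 < size (nzidx x))%N by case/andP: sbk; lia.
have [c hc xc] : exists2 c : 'I_n, nth 0%N (nzidx x) sb.-1 = c & x c 0 != 0.
  exact/nzidxP/mem_nth.
have rkc := nzrank_nth sbk hc.
case: (Bcol_cases sbk hp) => [->|[m /andP[mk msb] ->]|[m mk ->]].
- by exists c, c; rewrite /owner eqxx rkc.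
- have [t ht xt] := nzidxP (mem_nth 0%N mk); rewrite ht.
  have ntc : t != c.
    apply: contra_neq msb => etc; apply/eqP.
    by rewrite -(nth_uniq 0%N mk sbk' (uniq_nzidx x)) ht hc etc.
  exists t, c; split; first by rewrite flip_eq0.
  by rewrite /owner (negbTE ntc) flip_eq0 xt flipK nzrank_flip rkc.
have [d hd xd] : exists2 d : 'I_n, nth 0%N (zidx x) m = d & x d 0 == 0.
  by apply/zidxP/mem_nth; rewrite size_zidx.
move/eqP: xd => xd; rewrite hc hd.
have ncd : c != d by apply: contraNneq xc => ->; rewrite xd.
exists c, d; split; first by rewrite movezE (eq_sym d c) (negbTE ncd) eqxx.
by rewrite /owner (negbTE ncd) movezE !eqxx /= movezK ?rkc.
Qed.

Definition owner_dom xi : seq ('I_n * 'I_n) :=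
  [seq (j, c) | j <- enum 'I_n, c <- [seq c <- enum 'I_n | xi c 0 != 0]].

Lemma mem_owner_dom xi (j c : 'I_n) : ((j, c) \in owner_dom xi) = (xi c 0 != 0).
Proof.
apply/allpairsP/idP => [[[a b] [_ /= hb [_ ->]]]|xc].
  by move: hb; rewrite mem_filter => /andP[].
by exists (j, c); rewrite mem_enum mem_filter xc mem_enum.
Qed.

Lemma uniq_owner_dom xi : uniq (owner_dom xi).
Proof.
rewrite allpairs_uniq ?enum_uniq ?(filter_uniq _ (enum_uniq _)) //.
by move=> [a b] [a' b'] _ _ /= [-> ->].
Qed.

Lemma size_owner_dom xi : size (owner_dom xi) = (n * size (nzidx xi))%N.
Proof. by rewrite size_allpairs size_enum_ord /nzidx size_map. Qed.

Lemma perm_columns_owner z k xi : (forall x, x \in Nset z -> size (nzidx x) = k) ->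
    xi \in Nset z ->
  perm_eq [seq q <- Kfam z k | is_column xi (Bmat q.1 q.2)]
          [seq owner xi p.1 p.2 | p <- owner_dom xi].
Proof.
move=> sizeN hxi; apply: uniq_perm.
- by rewrite filter_uniq ?uniq_Kfam.
- rewrite map_inj_in_uniq ?uniq_owner_dom // => [[j c] [j' c']].
  by rewrite !mem_owner_dom => xc xc' /(owner_inj xc xc').
move=> q; rewrite mem_filter mem_Kfam; apply/idP/mapP.
  case: q => x sb /= /andP[col /andP[hx sbk]]; rewrite -(sizeN x hx) in sbk.
  have [j [c [xc e]]] := ownerP sbk col.
  by exists (j, c); rewrite ?mem_owner_dom.
case=> [[j c]]; rewrite mem_owner_dom => xc ->.
have hx := owner_Nset j c hxi.
by rewrite owner_column // hx -(sizeN _ hx) owner_rank.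
Qed.

End Owner.

Theorem lemma3p2 (R : realFieldType) (n : nat) (r : R) (zeta : 'cV[int]_n)
    (k : nat) :
  (1 <= n)%N -> 0 < r ->
  ((\sum_(i < n) (zeta i 0) ^+ 2)%:~R = r ^+ 2 :> R) ->
  #|[set i : 'I_n | zeta i 0 != 0]| = k -> (1 <= k)%N ->
  forall xi : 'cV[int]_n, xi \in Nset zeta ->
    count (fun q : 'cV[int]_n * nat => is_column xi (Bmat q.1 q.2))
          (Kfam zeta k) = (n * k)%N.
Proof.
move=> _ _ _ card_nz _ xi hxi.
have sizeN x : x \in Nset zeta -> size (nzidx x) = k.
  by move=> hx; rewrite (size_nzidx_Nset hx).
rewrite -size_filter (perm_size (perm_columns_owner sizeN hxi)) size_map.
by rewrite size_owner_dom sizeN.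
Qed.
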